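(* Let $A$ be a finite interval of integers and let $G$ be a signed digraph on $[n]$. If $G$ admits a nilpotent function over $A$, then for every initial strong component $I$ of $G$, the induced signed subgraph $G[I]$ admits a nilpotent function over $A$. Conversely, if every initial strong component $I$ of $G$ is such that $G[I]$ admits a nilpotent function over $A$, and moreover either $|A|\geq 3$, or $|A|=2$ and every unsigned arc of $G$ has both endpoints in the same initial strong component of $G$, then $G$ admits a nilpotent function over $A$.
   Context: A signed digraph is a digraph (loops allowed, no multiple arcs) in which each arc is labeled positive, negative, or null (unsigned). For a finite interval of integers $A$ and a finite vertex set $V$, a function over $A$ on $V$ is a map $f:A^V\to A^V$; $f^0=\mathrm{id}$, $f^k=f\circ f^{k-1}$. Its interaction graph $G(f)$ is the signed digraph on $V$ with an arc $(j,i)$ iff $f_i(a)\neq f_i(b)$ for some $a,b$ with $a_j<b_j$ and $a_\ell=b_\ell$ for $\ell\neq j$; such an arc is positive if $f_i(a)\leq f_i(b)$ for all such pairs, negative if $f_i(a)\geq f_i(b)$ for all such pairs, and null otherwise. A signed digraph $G$ admits $f$ if $G(f)=G$. $f$ is nilpotent if $f^k$ is constant for some $k$. A strong component of $G$ is a strongly connected component; it is initial if there is no arc $(u,v)$ of $G$ with $u\notin I$ and $v\in I$. $G[I]$ denotes the subgraph induced by $I$ (with inherited signs). *)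

From mathcomp Require Import all_boot.
Set Implicit Arguments. Unset Strict Implicit. Unset Printing Implicit Defensive.

Inductive sign := Pos | Neg | Null.

(* A signed digraph on a finite vertex set V: G u v = None means no arc (u,v);
   G u v = Some s means an arc (u,v) with sign s.  Loops allowed, no multiple
   arcs (automatically). *)
Definition sdigraph (V : finType) := V -> V -> option sign.

(* The finite interval of integers A with |A| = m is represented by 'I_m
   (order-isomorphic to any interval of m consecutive integers; all notions
   below only use the order on A). *)
Definition config (m : nat) (V : finType) := {ffun V -> 'I_m}.

Definition jpair (m : nat) (V : finType) (j : V) (a b : config m V) : bool :=
  (a j < b j) && [forall l, (l != j) ==> (a l == b l)].

Section Interaction.
Variables (m : nat) (V : finType) (f : config m V -> config m V).

Definition has_arc (j i : V) : bool :=
  [exists a, exists b, jpair j a b && (f a i != f b i)].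
Definition all_incr (j i : V) : bool :=
  [forall a, forall b, jpair j a b ==> (f a i <= f b i)].
Definition all_decr (j i : V) : bool :=
  [forall a, forall b, jpair j a b ==> (f b i <= f a i)].

Definition interaction_graph : sdigraph V := fun j i =>
  if ~~ has_arc j i then None
  else if all_incr j i then Some Pos
  else if all_decr j i then Some Neg
  else Some Null.

Definition nilpotent : Prop :=
  exists k : nat, forall x y : config m V, iter k f x = iter k f y.
End Interaction.

Definition admits (m : nat) (V : finType) (G : sdigraph V)
  (f : config m V -> config m V) : Prop :=
  forall u v, interaction_graph f u v = G u v.

Definition admits_nilpotent (m : nat) (V : finType) (G : sdigraph V) : Prop :=
  exists f : config m V -> config m V, admits G f /\ nilpotent f.

Definition adj (V : finType) (G : sdigraph V) : rel V := fun u v => isSome (G u v).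

Definition strong_component (V : finType) (G : sdigraph V) (I : {set V}) : Prop :=
  exists v, I = [set u | connect (adj G) v u && connect (adj G) u v].

Definition initial_strong_component (V : finType) (G : sdigraph V) (I : {set V}) : Prop :=
  strong_component G I /\ forall u v, adj G u v -> v \in I -> u \in I.

Definition induced (V : finType) (G : sdigraph V) (I : {set V}) :
  sdigraph {v : V | v \in I} := fun u w => G (val u) (val w).
Arguments induced {V} G I _ _.

From mathcomp Require Import all_boot.
From Stdlib Require Import Classical IndefiniteDescription.
Set Implicit Arguments. Unset Strict Implicit. Unset Printing Implicit Defensive.

(* An initial strong component I receives no arc from outside, so the coordinates
   of f in I only read coordinates in I; restricting f to I therefore gives a
   function with interaction graph G[I], and it is nilpotent because f is.
   Conversely, run the given nilpotent functions on the initial components and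
   attach every other vertex v to a parent p(v), an in-neighbour one step closer
   to the initial components. Let v output the OR, or the AND, of the literals
   of its in-arcs, where an arc of sign +, -, 0 from u tests x_u > 0, x_u = 0,
   x_u = 1 respectively; choose OR exactly when the literal of the arc from p(v)
   is eventually true. That literal then decides v's value, so v stabilises one
   step after p(v). The unsigned test x_u = 1 is monotone in neither direction
   only when |A| >= 3, which is why unsigned arcs need |A| >= 3 outside the
   initial components. *)

Section Configurations.
Variables (m : nat) (V : finType).
Implicit Types (x y a b : config m V) (d : 'I_m) (I : {set V}).
Implicit Types (f : config m V -> config m V).

Definition upd x (j : V) (d : 'I_m) : config m V :=
  [ffun l => if l == j then d else x l].

Definition restrict I x : config m {v | v \in I} := [ffun u => x (val u)].

Definition ext I (d : 'I_m) (y : config m {v | v \in I}) : config m V :=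
  [ffun v => if (insub v : option {v | v \in I}) is Some u then y u else d].

Arguments upd x j d : clear implicits.
Arguments restrict I x : clear implicits.
Arguments ext I d y : clear implicits.

Lemma upd_id x j : upd x j (x j) = x.
Proof. by apply/ffunP => l; rewrite ffunE; case: eqP => [->|]. Qed.

Lemma upd_jpair x j (d1 d2 : 'I_m) : d1 < d2 -> jpair j (upd x j d1) (upd x j d2).
Proof.
move=> lt; rewrite /jpair !ffunE eqxx lt; apply/forallP => l.
by apply/implyP => /negbTE nlj; rewrite !ffunE nlj.
Qed.

Lemma jpair_eq_off j a b : jpair j a b -> forall l, l != j -> a l = b l.
Proof. by case/andP=> _ /forallP H l nlj; apply/eqP; move: (H l); rewrite nlj. Qed.

Lemma eq_off_upd j x y : (forall l, l != j -> x l = y l) -> y = upd x j (y j).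
Proof.
by move=> xy; apply/ffunP => l; rewrite ffunE; case: eqP => [->|/eqP/xy].
Qed.

Lemma has_arcPn f j i :
  reflect (forall x d, f (upd x j d) i = f x i) (~~ has_arc f j i).
Proof.
apply: (iffP idP) => [noarc x d | f_upd].
  have f_jpair a b : jpair j a b -> f a i = f b i.
    move=> jab; apply/eqP; apply: contraNT noarc => ne.
    by apply/existsP; exists a; apply/existsP; exists b; rewrite jab.
  rewrite -[in RHS](upd_id x j); case: (ltngtP d (x j)) => [lt|gt|eq_d].
  - exact/f_jpair/upd_jpair.
  - exact/esym/f_jpair/upd_jpair.
  - by rewrite (val_inj eq_d).
apply/existsP => -[a /existsP [b /andP [jab]]].
by rewrite (eq_off_upd (jpair_eq_off jab)) f_upd eqxx.
Qed.

Lemma interaction_graph_no_arc f j i :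
  ~~ has_arc f j i -> interaction_graph f j i = None.
Proof. by rewrite /interaction_graph => ->. Qed.

Lemma adj_interaction_graph f j i : adj (interaction_graph f) j i = has_arc f j i.
Proof. by rewrite /adj /interaction_graph; case: has_arc => //=; do !case: ifP. Qed.

Lemma eq_on_no_arc_in f I i x y :
  (forall j, j \notin I -> ~~ has_arc f j i) -> {in I, x =1 y} -> f x i = f y i.
Proof.
move=> noarc.
suff eq_off_seq (s : seq V) x' :
    (forall v, (v \in I) || (v \notin s) -> x' v = y v) -> f x' i = f y i.
  by move=> xy; apply: (eq_off_seq (enum V)) => v; rewrite mem_enum orbF => /xy.
elim: s x' => [|j s IH] x' E.
  by congr (f _ i); apply/ffunP => v; apply: E; rewrite orbT.
have -> : f x' i = f (upd x' j (y j)) i.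
  have [jI|/noarc/has_arcPn -> //] := boolP (j \in I).
  by rewrite -(E j) ?upd_id ?jI.
apply: IH => v Hv; rewrite ffunE; case: eqP => [-> //|/eqP nvj].
by apply: E; rewrite in_cons negb_or nvj.
Qed.

Lemma restrict_ext I d (z : config m {v | v \in I}) : restrict I (ext I d z) = z.
Proof. by apply/ffunP => u; rewrite !ffunE valK. Qed.

Lemma ext_restrict I d x v : v \in I -> ext I d (restrict I x) v = x v.
Proof. by move=> vI; rewrite ffunE insubT ffunE. Qed.

Lemma restrict_upd I x j d : j \notin I -> restrict I (upd x j d) = restrict I x.
Proof.
move=> njI; apply/ffunP => u; rewrite !ffunE; case: eqP => // uj.
by move: njI; rewrite -uj (valP u).
Qed.

Lemma restrict_iter I f F :
  (forall x, restrict I (f x) = F (restrict I x)) ->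
  forall k x, restrict I (iter k f x) = iter k F (restrict I x).
Proof. by move=> fF; elim=> [|k IH] x //=; rewrite fF IH. Qed.

Lemma forall_implyE (T : finType) (p q : rel T) :
  [forall a, forall b, p a b ==> q a b] = ~~ [exists a, exists b, p a b && ~~ q a b].
Proof.
rewrite negb_exists; apply: eq_forallb => a; rewrite negb_exists.
by apply: eq_forallb => b; rewrite negb_and negbK implybE.
Qed.

End Configurations.
Arguments upd {m V} x j d.
Arguments restrict {m V} I x.
Arguments ext {m V} I d y.

Section Factor.
Variables (m : nat) (V : finType) (I : {set V}).
Variable F : config m {v | v \in I} -> config m {v | v \in I}.
Variables (f : config m V -> config m V) (i : {v | v \in I}).
Hypothesis f_factor : forall x, f x (val i) = F (restrict I x) i.

Implicit Types (a b x : config m V) (d : 'I_m).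

Lemma jpair_restrict (j : {v | v \in I}) a b :
  jpair (val j) a b -> jpair j (restrict I a) (restrict I b).
Proof.
move=> jab; rewrite /jpair !ffunE; case/andP: (jab) => -> _ /=.
apply/forallP => l; apply/implyP => nlj.
by rewrite !ffunE (jpair_eq_off jab) // -(inj_eq val_inj).
Qed.

Lemma jpair_ext (j : {v | v \in I}) d (a b : config m {v | v \in I}) :
  jpair j a b -> jpair (val j) (ext I d a) (ext I d b).
Proof.
move=> jab; rewrite /jpair !ffunE valK; case/andP: (jab) => -> _ /=.
apply/forallP => l; apply/implyP => nlj; rewrite !ffunE.
case: insubP => // u _ ul; rewrite (jpair_eq_off jab) //.
by rewrite -(inj_eq val_inj) ul.
Qed.

Lemma exists_jpair_factor (j : {v | v \in I}) (Q : rel 'I_m) :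
  [exists a, exists b, jpair (val j) a b && Q (f a (val i)) (f b (val i))] =
  [exists a, exists b, jpair j a b && Q (F a i) (F b i)].
Proof.
apply/existsP/existsP => -[a /existsP [b /andP [jab Qab]]].
  exists (restrict I a); apply/existsP; exists (restrict I b).
  by rewrite jpair_restrict // -!f_factor.
exists (ext I (a j) a); apply/existsP; exists (ext I (a j) b).
by rewrite jpair_ext //= !f_factor !restrict_ext.
Qed.

Lemma interaction_graph_factor (j : {v | v \in I}) :
  interaction_graph f (val j) (val i) = interaction_graph F j i.
Proof.
rewrite /interaction_graph /has_arc /all_incr /all_decr !forall_implyE.
by rewrite (exists_jpair_factor j (fun u w => u != w))
  (exists_jpair_factor j (fun u w => ~~ (u <= w)))
  (exists_jpair_factor j (fun u w => ~~ (w <= u))).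
Qed.

Lemma interaction_graph_factor_out j : j \notin I -> interaction_graph f j (val i) = None.
Proof.
move=> njI; apply/interaction_graph_no_arc/has_arcPn => x d.
by rewrite !f_factor restrict_upd.
Qed.
End Factor.

Lemma adj_admits (m : nat) (V : finType) (G : sdigraph V)
    (f : config m V -> config m V) j i :
  admits G f -> adj G j i = has_arc f j i.
Proof. by move=> adm; rewrite -adj_interaction_graph /adj adm. Qed.

Lemma admits_nilpotent_induced_initial (m : nat) (V : finType) (G : sdigraph V) :
  admits_nilpotent m G ->
  forall I, initial_strong_component G I -> admits_nilpotent m (induced G I).
Proof.
case=> f [adm [k nil]] I [[v0 defI] closed].
have v0I : v0 \in I by rewrite defI inE connect0.
pose u0 : {v | v \in I} := Sub v0 v0I.
pose h (z : config m {v | v \in I}) := restrict I (f (ext I (z u0) z)).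
have f_factor x (i : {v | v \in I}) : f x (val i) = h (restrict I x) i.
  rewrite /h ffunE; apply: (eq_on_no_arc_in (I := I)) => [j njI|v vI].
    move: njI; apply: contraNN; rewrite -(adj_admits _ _ adm) => /closed.
    by apply; apply: valP.
  by rewrite ext_restrict.
have f_restrict x : restrict I (f x) = h (restrict I x).
  by apply/ffunP => u; rewrite ffunE f_factor.
exists h; split.
  by move=> u w; rewrite /induced -adm (interaction_graph_factor (f_factor^~ w)).
exists k => z1 z2; rewrite -(restrict_ext (z1 u0) z1) -(restrict_ext (z2 u0) z2).
by rewrite -!(restrict_iter f_restrict) (nil _ (ext I (z2 u0) z2)).
Qed.

Section Literals.
Variable m' : nat.
Local Notation m := m'.+2.

Definition one : 'I_m := inord 1.
Definition bit (b : bool) : 'I_m := if b then one else ord0.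

Definition literal (s : sign) (d : 'I_m) : bool :=
  match s with Pos => 0 < d | Neg => d == 0 :> nat | Null => d == 1 :> nat end.

Definition witness (s : sign) (b : bool) : 'I_m :=
  if s is Neg then bit (~~ b) else bit b.

Lemma one_val : one = 1 :> nat.
Proof. by rewrite inordK. Qed.

Lemma literal_witness s b : literal s (witness s b) = b.
Proof. by case: s; case: b; rewrite /= ?one_val. Qed.

Lemma literal01 s : literal s ord0 != literal s one.
Proof. by case: s; rewrite /= one_val. Qed.

Lemma bit_le b1 b2 : (bit b1 <= bit b2) = (b1 ==> b2).
Proof. by case: b1; case: b2; rewrite /= ?one_val. Qed.

Lemma bit_inj : injective bit.
Proof. by case; case => // /(congr1 val); rewrite /= one_val. Qed.

Section Realization.
Variables (V : finType) (f : config m V -> config m V) (j i : V) (s : sign).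
Variables (P : bool -> config m V -> bool) (x0 : config m V).
Hypothesis null_pos : s = Null -> 0 < m'.
Hypothesis f_literal : forall x, f x i = bit (P (literal s (x j)) x).
Hypothesis P_upd : forall b x d, P b (upd x j d) = P b x.
Hypothesis P_mono : forall x, P false x ==> P true x.
Hypothesis P_x0 : forall b, P b x0 = b.

Lemma f_upd_x0 d : f (upd x0 j d) i = bit (literal s d).
Proof. by rewrite f_literal ffunE eqxx P_upd P_x0. Qed.

Lemma f_le (x y : config m V) : (forall l, l != j -> x l = y l) ->
  literal s (x j) ==> literal s (y j) -> f x i <= f y i.
Proof.
move=> xy; have Py b : P b y = P b x by rewrite (eq_off_upd xy) P_upd.
rewrite !f_literal Py bit_le.
by case: (literal s (x j)); case: (literal s (y j)) => //= _; rewrite ?implybb ?P_mono.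
Qed.

Lemma all_incr_literal :
  (forall d1 d2 : 'I_m, d1 < d2 -> literal s d1 ==> literal s d2) -> all_incr f j i.
Proof.
move=> incr; apply/forallP => a; apply/forallP => b; apply/implyP => jab.
by apply: f_le (jpair_eq_off jab) _; apply: incr; case/andP: jab.
Qed.

Lemma all_decr_literal :
  (forall d1 d2 : 'I_m, d1 < d2 -> literal s d2 ==> literal s d1) -> all_decr f j i.
Proof.
move=> decr; apply/forallP => a; apply/forallP => b; apply/implyP => jab.
apply: f_le (fun l nlj => esym (jpair_eq_off jab nlj)) _.
by apply: decr; case/andP: jab.
Qed.

Lemma not_all_incr (d1 d2 : 'I_m) :
  d1 < d2 -> literal s d1 -> ~~ literal s d2 -> ~~ all_incr f j i.
Proof.
move=> lt12 l1 l2; apply/negP => /forallP /(_ (upd x0 j d1)) /forallP /(_ (upd x0 j d2)).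
by rewrite upd_jpair // !f_upd_x0 bit_le l1 (negbTE l2).
Qed.

Lemma not_all_decr (d1 d2 : 'I_m) :
  d1 < d2 -> ~~ literal s d1 -> literal s d2 -> ~~ all_decr f j i.
Proof.
move=> lt12 l1 l2; apply/negP => /forallP /(_ (upd x0 j d1)) /forallP /(_ (upd x0 j d2)).
by rewrite upd_jpair // !f_upd_x0 bit_le l2 (negbTE l1).
Qed.

Lemma interaction_graph_literal : interaction_graph f j i = Some s.
Proof.
have lt01 : (ord0 : 'I_m) < one by rewrite one_val.
have arc : has_arc f j i.
  apply/existsP; exists (upd x0 j ord0); apply/existsP; exists (upd x0 j one).
  by rewrite upd_jpair // !f_upd_x0 (inj_eq bit_inj) literal01.
rewrite /interaction_graph arc /=; case Es: s null_pos => [||] hm.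
- rewrite all_incr_literal // => d1 d2 lt12.
  by rewrite Es /= (leq_ltn_trans (leq0n d1) lt12) implybT.
- rewrite (negbTE (not_all_incr lt01 _ _)) ?Es /= ?one_val //.
  rewrite all_decr_literal // => d1 d2 lt12.
  by rewrite Es /=; apply/implyP => /eqP d20; rewrite d20 in lt12.
- have two_val : (inord 2 : 'I_m) = 2 :> nat by rewrite inordK // !ltnS hm.
  have lt12 : one < (inord 2 : 'I_m) by rewrite one_val two_val.
  rewrite (negbTE (not_all_incr lt12 _ _)) ?Es /= ?one_val ?two_val //.
  by rewrite (negbTE (not_all_decr lt01 _ _)) ?Es /= ?one_val.
Qed.

End Realization.
End Literals.
Arguments one {m'}.
Arguments bit {m'} b.
Arguments witness {m'} s b.

Section Gate.
Variable T : finType.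
Implicit Types (b : bool) (E l : pred T).

Definition gate b E l : bool :=
  if b then [exists k in E, l k] else [forall k in E, l k].

Lemma gate_dominant b E l k : k \in E -> l k = b -> gate b E l = b.
Proof.
move=> kE lk; rewrite /gate; case: b lk => lk.
  by apply/existsP; exists k; rewrite kE lk.
by apply/negbTE/forallP => /(_ k); rewrite kE lk.
Qed.

Lemma eq_in_gate b E l1 l2 : {in E, l1 =1 l2} -> gate b E l1 = gate b E l2.
Proof.
move=> l12; rewrite /gate; case: b.
  by apply: eq_existsb => k; case: (boolP (k \in E)) => //= /l12.
by apply: eq_forallb => k; case: (boolP (k \in E)) => //= /l12.
Qed.

Lemma gate_mono b E l1 l2 :
  {in E, forall k, l1 k ==> l2 k} -> gate b E l1 ==> gate b E l2.
Proof.
move=> l12; apply/implyP; rewrite /gate; case: b.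
  case/existsP => k /andP [kE l1k]; apply/existsP; exists k.
  by rewrite kE (implyP (l12 k kE)).
move=> /forall_inP l1E; apply/forall_inP => k kE.
exact: (implyP (l12 k kE)) (l1E k kE).
Qed.

Lemma gate_neutral b E l : {in E, forall k, l k = ~~ b} -> gate b E l = ~~ b.
Proof.
move=> lE; rewrite /gate; case: b lE => lE /=.
  by apply/existsP => -[k /andP [kE]]; rewrite lE.
by apply/forall_inP => k kE; rewrite lE.
Qed.

Lemma gate_single b E l u :
  u \in E -> {in E, forall k, k != u -> l k = ~~ b} -> gate b E l = l u.
Proof.
move=> uE others; have [lu|nlu] := eqVneq (l u) b.
  by rewrite lu (gate_dominant uE lu).
have lu : l u = ~~ b by move: nlu; case: (l u); case: (b).
rewrite lu gate_neutral // => k kE; have [->//|nku] := eqVneq k u.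
exact: others.
Qed.

End Gate.

Section InitialComponents.
Variables (V : finType) (G : sdigraph V).
Local Notation e := (adj G).

Definition scomp (v : V) : {set V} := [set u | connect e v u && connect e u v].

Definition initial (v : V) : bool :=
  [forall b in scomp v, forall a, e a b ==> (a \in scomp v)].

Lemma scomp_refl v : v \in scomp v.
Proof. by rewrite inE connect0. Qed.

Lemma scomp_eq u v : u \in scomp v -> scomp u = scomp v.
Proof.
rewrite inE => /andP [vu uv]; apply/setP => w; rewrite !inE.
apply/andP/andP => [[uw wu]|[vw wv]]; split.
- exact: connect_trans vu uw.
- exact: connect_trans wu uv.
- exact: connect_trans uv vw.
- exact: connect_trans wv vu.
Qed.

Lemma initial_isc v : initial v -> initial_strong_component G (scomp v).
Proof.
move=> /forall_inP closed; split; first by exists v.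
by move=> a b ab /closed /forallP /(_ a); rewrite ab.
Qed.

Lemma isc_scomp I v : initial_strong_component G I -> v \in I -> I = scomp v.
Proof. by case=> [[w ->] _] /scomp_eq. Qed.

Lemma isc_initial I v : initial_strong_component G I -> v \in I -> initial v.
Proof.
move=> isc vI; have [_ closed] := isc; rewrite (isc_scomp isc vI) in closed.
by apply/forall_inP => b bv; apply/forallP => a; apply/implyP => /closed; apply.
Qed.

Lemma initial_scomp u v : initial v -> u \in scomp v -> initial u.
Proof. by move/initial_isc; apply: isc_initial. Qed.

(* A vertex with the fewest ancestors among those reaching [v] is initial. *)
Lemma exists_initial_ancestor v : exists2 u, initial u & connect e u v.
Proof.
pose R u := [set y | connect e y u].
case: (@arg_minnP _ v (connect e ^~ v) (fun u => #|R u|)) => [|u uv u_min].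
  exact: connect0.
exists u => //; apply/forall_inP => b; rewrite inE => /andP [ub bu].
apply/forallP => a; apply/implyP => ab.
have au : connect e a u := connect_trans (connect1 ab) bu.
rewrite inE au andbT; apply: contraT => nua.
have : #|R a| < #|R u|.
  apply: proper_card; apply/properP; split.
    by apply/subsetP => y; rewrite !inE => ya; apply: connect_trans ya au.
  by exists u; rewrite !inE ?connect0.
by rewrite ltnNge u_min //; apply: connect_trans au uv.
Qed.

Fixpoint layer (k : nat) : {set V} :=
  if k is k'.+1 then layer k' :|: [set v | [exists u in layer k', e u v]]
  else [set u | initial u].

Lemma layer_path p u k : u \in layer k -> path e u p -> last u p \in layer (k + size p).
Proof.
elim: p u k => [|w p IH] u k uk /=; first by rewrite addn0.
case/andP => uw wp; rewrite addnS -addSn; apply: IH wp.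
by rewrite /= !inE; apply/orP; right; apply/existsP; exists u; rewrite uk.
Qed.

Lemma exists_layer v : exists k, v \in layer k.
Proof.
have [u uI /connectP [p up ->]] := exists_initial_ancestor v.
by exists (0 + size p); apply: layer_path up; rewrite inE.
Qed.

Definition rank v := ex_minn (exists_layer v).

Lemma rank_spec v : v \in layer (rank v) /\ forall k, v \in layer k -> rank v <= k.
Proof. by rewrite /rank; case: ex_minnP. Qed.

Lemma rank_eq0 v : (rank v == 0) = initial v.
Proof.
have [vr r_min] := rank_spec v; apply/eqP/idP => [r0|Iv].
  by move: vr; rewrite r0 inE.
by apply/eqP; rewrite -leqn0; apply: r_min; rewrite inE.
Qed.

Definition par v := odflt v [pick u | (u \in layer (rank v).-1) && e u v].

Lemma par_spec v : ~~ initial v -> e (par v) v /\ rank (par v) < rank v.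
Proof.
rewrite -rank_eq0 /par; have [] := rank_spec v; case: (rank v) => // r vr r_min _ /=.
case: pickP => [u /andP [ur uv] | none] /=.
  by split => //; rewrite ltnS; apply: (rank_spec u).2.
move: vr; rewrite /= inE => /orP [vr|]; first by have := r_min _ vr; rewrite ltnn.
by rewrite inE => /existsP [u /andP [ur uv]]; have := none u; rewrite ur uv.
Qed.

End InitialComponents.

Section Gluing.
Variables (m' : nat) (V : finType) (G : sdigraph V).
Local Notation m := m'.+2.
Local Notation e := (adj G).
Variable h : forall I : {set V}, config m {v | v \in I} -> config m {v | v \in I}.
Arguments h I _ : clear implicits.
Variable K : {set V} -> nat.
Hypothesis h_spec : forall I, initial_strong_component G I ->
  admits (induced G I) (h I) /\ forall x y, iter (K I) (h I) x = iter (K I) (h I) y.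
Hypothesis null_arcs : forall u v, G u v = Some Null -> ~~ initial G v -> 0 < m'.

Definition arc_sign (u v : V) : sign := odflt Pos (G u v).

Definition initial_target (v : V) : 'I_m :=
  ext (scomp G v) ord0 (iter (K (scomp G v)) (h (scomp G v)) [ffun=> ord0]) v.

(* The limit of [glued], computed along the parent forest; the fuel [rank G v]
   suffices, by [target_fuel_stable]. *)
Fixpoint target_fuel (n : nat) (v : V) : 'I_m :=
  if initial G v then initial_target v
  else if n is n'.+1 then bit (literal (arc_sign (par G v) v) (target_fuel n' (par G v)))
  else ord0.

Definition target (v : V) : 'I_m := target_fuel (rank G v) v.

Definition bias (v : V) : bool := literal (arc_sign (par G v) v) (target (par G v)).

Definition glued (x : config m V) : config m V := [ffun v =>
  if initial G v then ext (scomp G v) ord0 (h (scomp G v) (restrict (scomp G v) x)) v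
  else bit (gate (bias v) (e ^~ v) (fun u => literal (arc_sign u v) (x u)))].

Lemma target_fuel_stable n1 n2 v :
  rank G v <= n1 -> rank G v <= n2 -> target_fuel n1 v = target_fuel n2 v.
Proof.
elim: n1 n2 v => [|n1 IH] [|n2] v r1 r2 //=; case: ifP => // nIv.
all: have [_ lt] := par_spec (negbT nIv).
- by have := leq_trans lt r1.
- by have := leq_trans lt r2.
congr bit; congr literal; apply: IH; rewrite -ltnS; exact: leq_trans lt _.
Qed.

Lemma target_initial v : initial G v -> target v = initial_target v.
Proof. by rewrite /target; case: (rank G v) => [|r] /= ->. Qed.

Lemma target_noninitial v : ~~ initial G v -> target v = bit (bias v).
Proof.
move=> nIv; have [_ lt] := par_spec nIv; rewrite /target /bias.
move: lt; case: (rank G v) => [|r] lt //=; rewrite (negbTE nIv).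
by congr bit; congr literal; apply: target_fuel_stable.
Qed.

Lemma glued_initial v (Iv : initial G v) (i : {u | u \in scomp G v}) x :
  glued x (val i) = h (scomp G v) (restrict (scomp G v) x) i.
Proof.
have iv := valP i.
by rewrite ffunE (initial_scomp Iv iv) (scomp_eq iv) ffunE valK.
Qed.

Lemma glued_noninitial v x : ~~ initial G v ->
  glued x v = bit (gate (bias v) (e ^~ v) (fun u => literal (arc_sign u v) (x u))).
Proof. by move=> nIv; rewrite ffunE (negbTE nIv). Qed.

Lemma interaction_graph_glued_initial u v :
  initial G v -> interaction_graph glued u v = G u v.
Proof.
move=> Iv; pose i : {w | w \in scomp G v} := Sub v (scomp_refl G v).
have [uv|nuv] := boolP (u \in scomp G v).
  rewrite -[u]/(val (Sub u uv : {w | w \in scomp G v})) -[v]/(val i).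
  by rewrite (interaction_graph_factor (glued_initial Iv i)) (h_spec (initial_isc Iv)).1.
rewrite -[v]/(val i) (interaction_graph_factor_out (glued_initial Iv i) nuv) /=.
case Euv: (G u v) => [s|] //; have [_ closed] := initial_isc Iv.
by move: nuv; rewrite (closed u v) ?scomp_refl // /adj Euv.
Qed.

Lemma interaction_graph_glued_noninitial u v :
  ~~ initial G v -> interaction_graph glued u v = G u v.
Proof.
move=> nIv; case Euv: (G u v) => [s|]; last first.
  apply/interaction_graph_no_arc/has_arcPn => x d.
  rewrite !glued_noninitial //; congr bit.
  apply: eq_in_gate => k kv; rewrite ffunE; case: eqP => // ku.
  by move: kv; rewrite ku unfold_in /adj Euv.
have uv : u \in e ^~ v by rewrite unfold_in /adj Euv.
pose x0 : config m V := [ffun k => witness (arc_sign k v) (~~ bias v)].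
apply: (interaction_graph_literal (x0 := x0)
  (P := fun b x => gate (bias v) (e ^~ v)
                     (fun k => if k == u then b else literal (arc_sign k v) (x k)))).
- by move=> sN; apply: (null_arcs (u := u) (v := v)); rewrite ?Euv ?sN.
- move=> x; rewrite glued_noninitial //; congr bit; apply: eq_in_gate => k _.
  by case: eqP => // ->; rewrite /arc_sign Euv.
- move=> b x d; apply: eq_in_gate => k _; rewrite ffunE.
  by case: eqP.
- by move=> x /=; apply: gate_mono => k _; case: eqP => // _; apply: implybb.
- move=> b; rewrite (gate_single (u := u)) ?eqxx // => k _ /negbTE ->.
  by rewrite ffunE literal_witness.
Qed.

Lemma glued_admits : admits G glued.
Proof.
move=> u v; have [Iv|nIv] := boolP (initial G v).
  exact: interaction_graph_glued_initial.
exact: interaction_graph_glued_noninitial.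
Qed.

Lemma restrict_glued v : initial G v ->
  forall x, restrict (scomp G v) (glued x) = h (scomp G v) (restrict (scomp G v) x).
Proof. by move=> Iv x; apply/ffunP => i; rewrite ffunE glued_initial. Qed.

Definition Kmax : nat := \max_v K (scomp G v).

Lemma iter_glued_initial v t x : initial G v -> Kmax <= t -> iter t glued x v = target v.
Proof.
move=> Iv Kt; have Kvt : K (scomp G v) <= t by apply: leq_trans (leq_bigmax v) Kt.
rewrite target_initial // -(ext_restrict ord0 (iter t glued x) (scomp_refl G v)).
rewrite (restrict_iter (restrict_glued Iv)) /initial_target -(subnKC Kvt) iterD.
by have [_ nil] := h_spec (initial_isc Iv); rewrite (nil _ [ffun=> ord0]).
Qed.

Lemma iter_glued r v t x :
  rank G v <= r -> Kmax + rank G v <= t -> iter t glued x v = target v.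
Proof.
elim: r v t x => [|r IH] v t x rv Kt; have [Iv|nIv] := boolP (initial G v).
- by apply: iter_glued_initial => //; apply: leq_trans (leq_addr _ _) Kt.
- by move: rv; rewrite leqn0 rank_eq0 (negbTE nIv).
- by apply: iter_glued_initial => //; apply: leq_trans (leq_addr _ _) Kt.
have [pv lt] := par_spec nIv.
case: t Kt => [|t] Kt; first by rewrite leqn0 addn_eq0 rank_eq0 (negbTE nIv) andbF in Kt.
rewrite iterS glued_noninitial // target_noninitial //; congr bit.
apply: (gate_dominant (k := par G v)) => //; rewrite (IH (par G v)) //.
  by rewrite -ltnS (leq_trans lt rv).
by rewrite -ltnS -addnS (leq_trans _ Kt) // leq_add2l.
Qed.

Lemma glued_nilpotent : nilpotent glued.
Proof.
exists (Kmax + \max_v rank G v) => x y; apply/ffunP => v.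
by rewrite !(iter_glued (r := rank G v)) // leq_add2l (leq_bigmax v).
Qed.

End Gluing.

Lemma choose_nilpotent_components (m : nat) (V : finType) (G : sdigraph V) :
  (forall I, initial_strong_component G I -> admits_nilpotent m (induced G I)) ->
  exists (h : forall I : {set V}, config m {v | v \in I} -> config m {v | v \in I})
         (K : {set V} -> nat),
    forall I, initial_strong_component G I ->
      admits (induced G I) (h I) /\ forall x y, iter (K I) (h I) x = iter (K I) (h I) y.
Proof.
move=> nilI.
have spec (I : {set V}) :
    exists hK : (config m {v | v \in I} -> config m {v | v \in I}) * nat,
    initial_strong_component G I ->
    admits (induced G I) hK.1 /\ forall x y, iter hK.2 hK.1 x = iter hK.2 hK.1 y.
  have [/nilI [f [adm [k nil]]]|nI] := classic (initial_strong_component G I).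
    by exists (f, k).
  by exists (id, 0).
pose hK (I : {set V}) := sval (constructive_indefinite_description _ (spec I)).
exists (fun I => (hK I).1), (fun I => (hK I).2) => I.
exact: svalP (constructive_indefinite_description _ (spec I)).
Qed.

Theorem proposition3 (m n : nat) (G : sdigraph 'I_n) :
  (admits_nilpotent m G ->
     forall I : {set 'I_n}, initial_strong_component G I ->
       admits_nilpotent m (induced G I)) /\
  ((forall I : {set 'I_n}, initial_strong_component G I ->
       admits_nilpotent m (induced G I)) ->
   (3 <= m \/
    (m = 2 /\ forall u v : 'I_n, G u v = Some Null ->
       exists I : {set 'I_n}, initial_strong_component G I /\ u \in I /\ v \in I)) ->
   admits_nilpotent m G).
Proof.
split; first exact: admits_nilpotent_induced_initial.
move=> /choose_nilpotent_components [h [K hK]].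
case: m h K hK => [|[|m']] h K hK; try by case=> [//|[]].
move=> wide; have null_arcs u v : G u v = Some Null -> ~~ initial G v -> 0 < m'.
  case: wide => [//|[_ nullI] /nullI [I [isc [_ vI]]]].
  by rewrite (isc_initial isc vI).
exists (glued G h K); split; first exact: glued_admits hK null_arcs.
exact: glued_nilpotent hK.
Qed.
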